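(* Let $G$ be a group (finite or infinite), let $F$ be a field of characteristic zero, and let $\mathfrak{S}$ be a subring of $F[G]$. Then $\mathfrak{S}$ is a Schur ring over $G$ if and only if $\mathfrak{S}$ is closed under the Hadamard product $\circ$ and under the involution $*$, $1\in\mathfrak{S}$, and for every $g\in G$ there exists $\alpha\in\mathfrak{S}$ with $g\in\operatorname{supp}(\alpha)$.
   Context: Elements of $F[G]$ are $\alpha=\sum_{g\in G}\alpha_g g$ with finitely many nonzero $\alpha_g\in F$; $\operatorname{supp}(\alpha)=\{g\mid\alpha_g\neq0\}$; $\alpha\circ\beta=\sum_g\alpha_g\beta_g g$; $\alpha^*=\sum_g\alpha_g g^{-1}$. For finite $C\subseteq G$, $\overline{C}=\sum_{g\in C}g$ and $C^*=\{g^{-1}\mid g\in C\}$. A Schur module is an $F$-subspace $\mathfrak{S}=\operatorname{Span}_F\{\overline{C}\mid C\in\mathcal{P}\}$ for a partition $\mathcal{P}$ of $G$ into finite sets; this partition is denoted $\mathcal{D}(\mathfrak{S})$. A Schur ring over $G$ is a Schur module $\mathfrak{S}$ such that (i) $\{1\}\in\mathcal{D}(\mathfrak{S})$; (ii) $C\in\mathcal{D}(\mathfrak{S})$ implies $C^*\in\mathcal{D}(\mathfrak{S})$; (iii) for all $C,D\in\mathcal{D}(\mathfrak{S})$, $\overline{C}\cdot\overline{D}=\sum_{E\in\mathcal{D}(\mathfrak{S})}\lambda_{CDE}\overline{E}$ with only finitely many $\lambda_{CDE}\in F$ nonzero. *)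

From HB Require Import structures.
From mathcomp Require Import all_boot all_order all_algebra.
From mathcomp Require Import finmap.
Set Implicit Arguments. Unset Strict Implicit. Unset Printing Implicit Defensive.
Import GRing.Theory.
Local Open Scope fset_scope.
Local Open Scope ring_scope.

Section GroupRing.
Variables (G : groupType) (F : fieldType).

Definition FG := {fsfun G -> F with 0}.

Definition supp (a : FG) : {fset G} := finsupp a.

Definition FG0 : FG := [fsfun g in fset0 => (0 : F)].
Definition FGadd (a b : FG) : FG := [fsfun g in supp a `|` supp b => a g + b g].
Definition FGscale (c : F) (a : FG) : FG := [fsfun g in supp a => c * a g].
Definition FGmul (a b : FG) : FG :=
  [fsfun g in [fset (x * y)%g | x in supp a, y in supp b] =>
     \sum_(h <- supp a) a h * b (h^-1 * g)%g].
Definition FG1 : FG := [fsfun g in [fset (1 : G)%g] => (1 : F)].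
Definition hadamard (a b : FG) : FG := [fsfun g in supp a => a g * b g].
Definition FGstar (a : FG) : FG :=
  [fsfun g in [fset (h^-1)%g | h in supp a] => a (g^-1)%g].
Definition csum (C : {fset G}) : FG := [fsfun g in C => (1 : F)].
Definition finv (C : {fset G}) : {fset G} := [fset (c^-1)%g | c in C].

Definition lincomb (s : seq (F * {fset G})) : FG :=
  foldr (fun cC acc => FGadd (FGscale cC.1 (csum cC.2)) acc) FG0 s.

Definition is_fin_partition (P : {fset G} -> Prop) : Prop :=
  [/\ forall C, P C -> C != fset0,
      forall C D, P C -> P D -> C != D -> C `&` D = fset0
    & forall g, exists C, P C /\ g \in C].

Definition span_classes (P : {fset G} -> Prop) (a : FG) : Prop :=
  exists s : seq (F * {fset G}), (forall cC, cC \in s -> P cC.2) /\ a = lincomb s.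

Definition schur_module_of (S : FG -> Prop) (P : {fset G} -> Prop) : Prop :=
  is_fin_partition P /\ (forall a, S a <-> span_classes P a).

Definition is_schur_ring (S : FG -> Prop) : Prop :=
  exists P : {fset G} -> Prop,
    [/\ schur_module_of S P,
        P [fset (1 : G)%g],
        (forall C, P C -> P (finv C))
      & (forall C D, P C -> P D -> span_classes P (FGmul (csum C) (csum D)))].

(* subring of F[G] (F-subalgebra, not necessarily containing 1) *)
Definition is_subring (S : FG -> Prop) : Prop :=
  [/\ S FG0,
      (forall a b, S a -> S b -> S (FGadd a b)),
      (forall c a, S a -> S (FGscale c a))
    & (forall a b, S a -> S b -> S (FGmul a b))].

End GroupRing.

From Pilot Require Import Defs.
From HB Require Import structures.
From mathcomp Require Import all_boot all_order all_algebra.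
From mathcomp Require Import finmap.
From mathcomp Require Import ring.
From Stdlib Require Import Classical_Prop.

(** If [S] is spanned by the class sums of a partition [P], then the Hadamard
    product and the involution act on class sums by intersection and
    inversion, so [S] is closed under both as soon as [P] is closed under
    inversion.

    Conversely, applying pointwise to [a] in [S] a polynomial without constant
    term stays inside [S]; interpolating on the finitely many values of [a]
    shows that every level set [{h | a h = c}], [c != 0], has its class sum in
    [S].  The atoms -- minimal nonempty finite sets whose class sums lie in
    [S] -- are then pairwise disjoint, every [a] in [S] is constant on each
    atom meeting its support, and subtracting multiples of atoms decomposes
    [a] as a combination of atoms.  Inversion maps atoms to atoms, [{1}] is an
    atom, and the cover hypothesis makes the atoms cover [G]. *)

Import GRing.Theory.
Local Open Scope fset_scope.
Local Open Scope ring_scope.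

(* fingraph, imported after Defs, also exports a [finv]. *)
Local Notation finv := Defs.finv.

Section SchurRings.
Set Implicit Arguments. Unset Strict Implicit. Unset Printing Implicit Defensive.

Variables (G : groupType) (F : fieldType).
Implicit Types (a b x y : FG G F) (C D M : {fset G}) (g h : G) (c : F).

Lemma mem_supp a g : (g \in supp a) = (a g != 0).
Proof. by rewrite /supp mem_finsupp. Qed.

Lemma memNsupp a g : g \notin supp a -> a g = 0.
Proof. by rewrite mem_supp negbK => /eqP. Qed.

Lemma FG0E g : FG0 G F g = 0.
Proof. by rewrite /FG0 fsfunE; case: (g \in _). Qed.

Lemma FGaddE a b g : FGadd a b g = a g + b g.
Proof.
rewrite /FGadd fsfunE inE; case: ifP => // /norP [ag bg].
by rewrite !memNsupp // addr0.
Qed.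

Lemma FGscaleE c a g : FGscale c a g = c * a g.
Proof.
by rewrite /FGscale fsfunE; case: ifP => // /negbT /memNsupp ->; rewrite mulr0.
Qed.

Lemma hadamardE a b g : hadamard a b g = a g * b g.
Proof.
by rewrite /hadamard fsfunE; case: ifP => // /negbT /memNsupp ->; rewrite mul0r.
Qed.

Lemma FGstarE a g : FGstar a g = a (g^-1)%g.
Proof.
rewrite /FGstar fsfunE; case: ifP => // /negbT gN; rewrite memNsupp //.
by apply: contra gN => ga; apply/imfsetP; exists (g^-1)%g; rewrite ?invgK.
Qed.

Lemma csumE C g : csum F C g = (g \in C)%:R.
Proof. by rewrite /csum fsfunE; case: ifP. Qed.

Lemma supp_csum C : supp (csum F C) = C.
Proof.
by apply/fsetP => g; rewrite mem_supp csumE; case: (g \in C); rewrite ?oner_eq0 ?eqxx.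
Qed.

Lemma mem_finv C g : (g \in finv C) = ((g^-1)%g \in C).
Proof. by rewrite -{1}(invgK g) /finv mem_imfset //; apply: invg_inj. Qed.

Lemma finvK C : finv (finv C) = C.
Proof. by apply/fsetP => g; rewrite !mem_finv invgK. Qed.

Lemma finv_eq0 C : (finv C == fset0) = (C == fset0).
Proof.
have finv0 : finv (fset0 : {fset G}) = fset0.
  by apply/fsetP => g; rewrite mem_finv !in_fset0.
by apply/eqP/eqP => [C0 | ->]; rewrite // -(finvK C) C0.
Qed.

Lemma finv_subset C D : D `<=` finv C -> finv D `<=` C.
Proof.
move=> /fsubsetP DC; apply/fsubsetP => g; rewrite mem_finv => /DC.
by rewrite mem_finv invgK.
Qed.

Lemma csum0 : csum F fset0 = FG0 G F.
Proof. by apply/fsfunP => g; rewrite csumE FG0E in_fset0. Qed.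

Lemma csum1 : csum F [fset 1%g] = FG1 G F.
Proof. by apply/fsfunP => g; rewrite csumE in_fset1. Qed.

Lemma FGstar_csum C : FGstar (csum F C) = csum F (finv C).
Proof. by apply/fsfunP => g; rewrite FGstarE !csumE mem_finv. Qed.

Lemma hadamard_csum C D : hadamard (csum F C) (csum F D) = csum F (C `&` D).
Proof.
apply/fsfunP => g; rewrite hadamardE !csumE in_fsetI.
by case: (g \in C); rewrite ?mul1r ?mul0r.
Qed.

Lemma csumD C D :
  csum F (C `\` D) = FGadd (csum F C) (FGscale (-1) (csum F (C `&` D))).
Proof.
apply/fsfunP => g; rewrite FGaddE FGscaleE !csumE in_fsetI in_fsetD.
by case: (g \in C); case: (g \in D); rewrite ?mulr0 ?addr0 ?mulN1r ?subrr.
Qed.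

Lemma lincomb1 C : lincomb [:: (1, C)] = csum F C.
Proof. by apply/fsfunP => g; rewrite /= FGaddE FGscaleE FG0E mul1r addr0. Qed.

Lemma hadamardDl b : {morph (fun x => hadamard x b) : x y / FGadd x y}.
Proof. by move=> x y; apply/fsfunP => g; rewrite !(hadamardE, FGaddE) mulrDl. Qed.

Lemma hadamardZl b c : {morph (fun x => hadamard x b) : x / FGscale c x}.
Proof. by move=> x; apply/fsfunP => g; rewrite !(hadamardE, FGscaleE) mulrA. Qed.

Lemma hadamard0l b : hadamard (FG0 G F) b = FG0 G F.
Proof. by apply/fsfunP => g; rewrite !(hadamardE, FG0E) mul0r. Qed.

Lemma hadamardDr b : {morph hadamard b : x y / FGadd x y}.
Proof. by move=> x y; apply/fsfunP => g; rewrite !(hadamardE, FGaddE) mulrDr. Qed.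

Lemma hadamardZr b c : {morph hadamard b : x / FGscale c x}.
Proof. by move=> x; apply/fsfunP => g; rewrite !(hadamardE, FGscaleE) mulrCA. Qed.

Lemma hadamard0r b : hadamard b (FG0 G F) = FG0 G F.
Proof. by apply/fsfunP => g; rewrite !(hadamardE, FG0E) mulr0. Qed.

Lemma FGstarD : {morph @FGstar G F : x y / FGadd x y}.
Proof. by move=> x y; apply/fsfunP => g; rewrite !(FGstarE, FGaddE). Qed.

Lemma FGstarZ c : {morph @FGstar G F : x / FGscale c x}.
Proof. by move=> x; apply/fsfunP => g; rewrite !(FGstarE, FGscaleE). Qed.

Lemma FGstar0 : FGstar (FG0 G F) = FG0 G F.
Proof. by apply/fsfunP => g; rewrite !(FGstarE, FG0E). Qed.

Definition level_poly a (vs : seq F) : FG G F :=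
  foldr (fun v p => FGadd (hadamard p a) (FGscale (- v) p)) a vs.

Lemma level_polyE a vs h : level_poly a vs h = a h * \prod_(v <- vs) (a h - v).
Proof.
elim: vs => [|v vs IH] /=; first by rewrite big_nil mulr1.
by rewrite FGaddE hadamardE FGscaleE IH big_cons; ring.
Qed.

Definition level a c : {fset G} := [fset h in supp a | a h == c].

Lemma mem_level a c h : (h \in level a c) = (h \in supp a) && (a h == c).
Proof. by rewrite !inE. Qed.

Lemma csum_levelE a c : c != 0 ->
  let vs := [seq a h | h <- supp a & a h != c] in
  csum F (level a c) = FGscale (c * \prod_(v <- vs) (c - v))^-1 (level_poly a vs).
Proof.
move=> c0 vs; apply/fsfunP => h; rewrite FGscaleE level_polyE csumE mem_level.
have vsNc v : v \in vs -> c - v != 0.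
  by case/mapP => x; rewrite mem_filter => /andP [xNc _] ->; rewrite subr_eq0 eq_sym.
have [ha | /negbTE haN] := boolP (h \in supp a); last first.
  by rewrite memNsupp ?haN // !mul0r mulr0.
have [-> | ahNc] := eqVneq (a h) c.
  by rewrite mulVf // mulf_neq0 // prodf_seq_neq0; apply/allP.
suff -> : \prod_(v <- vs) (a h - v) = 0 by rewrite andbF !mulr0.
apply/eqP; rewrite prodf_seq_eq0; apply/hasP; exists (a h); last by rewrite subrr eqxx.
by apply/mapP; exists h; rewrite // mem_filter ahNc.
Qed.

Section Closure.
Variable S : FG G F -> Prop.
Hypotheses (S0 : S (FG0 G F))
  (S_add : forall a b, S a -> S b -> S (FGadd a b))
  (S_scale : forall c a, S a -> S (FGscale c a)).

Lemma S_linear_span (f : FG G F -> FG G F) (P : {fset G} -> Prop) a :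
  {morph f : x y / FGadd x y} -> (forall c, {morph f : x / FGscale c x}) ->
  f (FG0 G F) = FG0 G F -> (forall C, P C -> S (f (csum F C))) ->
  span_classes P a -> S (f a).
Proof.
move=> fD fZ f0 SfP [s [sP ->]].
elim: s sP => [|[c C] s IH] sP /=; first by rewrite f0.
rewrite fD fZ; apply: S_add; first by apply/S_scale/SfP/(sP (c, C))/mem_head.
by apply: IH => cC cCs; apply: sP; rewrite inE cCs orbT.
Qed.

Section SchurModule.
Variable P : {fset G} -> Prop.
Hypotheses (P_part : is_fin_partition P) (S_span : forall a, S a <-> span_classes P a).

Lemma S_csum C : P C -> S (csum F C).
Proof.
move=> PC; apply/S_span; exists [:: (1, C)]; rewrite lincomb1; split=> //.
by move=> cC; rewrite inE => /eqP ->.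
Qed.

Lemma S_hadamard a b : S a -> S b -> S (hadamard a b).
Proof.
move=> /S_span Sa /S_span Sb.
apply: (S_linear_span (hadamardDl b) (hadamardZl b) (hadamard0l b) _ Sa) => C PC.
apply: (S_linear_span (hadamardDr _) (hadamardZr _) (hadamard0r _) _ Sb) => D PD.
rewrite hadamard_csum; have [_ P_disj _] := P_part.
have [<- | CD] := eqVneq C D; first by rewrite fsetIid; apply: S_csum.
by rewrite P_disj // csum0.
Qed.

Lemma S_star : (forall C, P C -> P (finv C)) -> forall a, S a -> S (FGstar a).
Proof.
move=> P_finv a /S_span; apply: (S_linear_span FGstarD FGstarZ FGstar0) => C PC.
by rewrite FGstar_csum; apply/S_csum/P_finv.
Qed.

End SchurModule.

Section Atoms.
Hypothesis S_had : forall a b, S a -> S b -> S (hadamard a b).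

Definition inS C := S (csum F C).

Definition atom C :=
  [/\ inS C, C != fset0 & forall D, inS D -> D `<=` C -> D = fset0 \/ D = C].

Lemma inS_I C D : inS C -> inS D -> inS (C `&` D).
Proof. by move=> SC SD; rewrite /inS -hadamard_csum; apply: S_had. Qed.

Lemma inS_D C D : inS C -> inS D -> inS (C `\` D).
Proof. by move=> SC SD; rewrite /inS csumD; apply/S_add/S_scale/inS_I. Qed.

Lemma S_level_poly a vs : S a -> S (level_poly a vs).
Proof.
by move=> Sa; elim: vs => [|v vs IH] //=; apply: S_add; [apply: S_had | apply: S_scale].
Qed.

Lemma inS_level a c : S a -> c != 0 -> inS (level a c).
Proof. by move=> Sa c0; rewrite /inS csum_levelE //; apply/S_scale/S_level_poly. Qed.

Lemma exists_atom C g : inS C -> g \in C -> exists2 M, atom M & g \in M.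
Proof.
have [n] := ubnP #|` C|; elim: n C => // n IH C /ltnSE C_le SC gC.
have [[D [SD DC D0]] | unsplit] :=
  classic (exists D, [/\ inS D, D `<` C & D != fset0]); last first.
  exists C => //; split=> //; first by apply: contraTneq gC => ->.
  move=> D SD DC; have [-> | D0] := eqVneq D fset0; first by left.
  have [-> | DNC] := eqVneq D C; first by right.
  by case: unsplit; exists D; rewrite fproperEneq DNC DC.
have [gD | gND] := boolP (g \in D).
  by apply: (IH D) => //; apply: leq_trans (fproper_ltn_card DC) C_le.
have CDC : C `\` D `<` C.
  by rewrite -[X in _ `<` X]fsetD0 fsetDpS ?fproper_sub ?fproper0.
apply: (IH (C `\` D)); first exact: leq_trans (fproper_ltn_card CDC) C_le.
  exact: inS_D.
by rewrite in_fsetD gND.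
Qed.

Lemma exists_atom_supp a g : S a -> g \in supp a -> exists2 M, atom M & g \in M.
Proof.
move=> Sa ga; have ag0 : a g != 0 by rewrite -mem_supp.
by apply: (exists_atom (inS_level Sa ag0)); rewrite mem_level ga eqxx.
Qed.

Lemma atom_sub_level M a g :
  atom M -> S a -> g \in M -> g \in supp a -> M `<=` level a (a g).
Proof.
case=> SM _ M_min Sa gM ga.
have ag0 : a g != 0 by rewrite -mem_supp.
have [MI0 | MI] := M_min _ (inS_I SM (inS_level Sa ag0)) (fsubsetIl _ _).
  by move: (in_fset0 g); rewrite -MI0 in_fsetI gM mem_level ga eqxx.
by apply/fsetIidPl.
Qed.

Lemma atom_disjoint C D : atom C -> atom D -> C != D -> C `&` D = fset0.
Proof.
move=> [SC _ C_min] [SD _ D_min] CD; have SCD := inS_I SC SD.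
have [// | CDC] := C_min _ SCD (fsubsetIl _ _).
have [// | CDD] := D_min _ SCD (fsubsetIr _ _).
by move: CD; rewrite -CDC -{2}CDD eqxx.
Qed.

Lemma S_span_atoms a : S a -> span_classes atom a.
Proof.
have [n] := ubnP #|` supp a|; elim: n a => // n IH a /ltnSE supp_le Sa.
have [supp0 | [g ga]] := fset_0Vmem (supp a).
  by exists [::]; split=> //; apply/fsfunP => h; rewrite FG0E memNsupp ?supp0.
have ag0 : a g != 0 by rewrite -mem_supp.
have [M atomM gM] := exists_atom_supp Sa ga.
have /fsubsetP M_level := atom_sub_level atomM Sa gM ga.
set a' := FGadd a (FGscale (- a g) (csum F M)).
have a'E h : a' h = a h - a g * (h \in M)%:R by rewrite FGaddE FGscaleE csumE mulNr.
have supp_a' : supp a' `<` supp a.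
  apply: (fsub_proper_trans (B := supp a `\ g)); last exact: fproperD1.
  apply/fsubsetP => h; rewrite in_fsetD1 mem_supp a'E.
  have [hM | hNM] := boolP (h \in M).
    move: (M_level h hM); rewrite mem_level => /andP [_ /eqP ->].
    by rewrite mulr1 subrr eqxx.
  rewrite mulr0 subr0 -mem_supp => ha; rewrite ha andbT.
  by apply: contraNneq hNM => ->.
have Sa' : S a' by case: atomM => SM _ _; apply/S_add/S_scale.
have [s [s_atoms a's]] := IH a' (leq_trans (fproper_ltn_card supp_a') supp_le) Sa'.
exists ((a g, M) :: s); split.
  by move=> cC; rewrite inE => /predU1P [-> // | /s_atoms].
by rewrite /= -a's; apply/fsfunP => h; rewrite FGaddE FGscaleE a'E csumE addrC subrK.
Qed.

Lemma S_spanE a : S a <-> span_classes atom a.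
Proof.
by split; [apply: S_span_atoms | apply: (S_linear_span (f := id)) => // C []].
Qed.

Lemma atoms_partition :
  (forall g, exists a, S a /\ g \in supp a) -> is_fin_partition atom.
Proof.
move=> S_cover; split; [by move=> C [] | exact: atom_disjoint |] => g.
have [a [Sa ga]] := S_cover g; have [M atomM gM] := exists_atom_supp Sa ga.
by exists M.
Qed.

Lemma atom1 : S (FG1 G F) -> atom [fset 1%g].
Proof.
move=> S1; split; first by rewrite /inS csum1.
  by rewrite -cardfs_eq0 cardfs1.
by move=> D _; rewrite fsubset1 => /orP [] /eqP ->; [right | left].
Qed.

Lemma atom_finv :
  (forall a, S a -> S (FGstar a)) -> forall C, atom C -> atom (finv C).
Proof.
move=> S_star C [SC C0 C_min].
have inS_finv D : inS D -> inS (finv D) by rewrite /inS -FGstar_csum; apply: S_star.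
split; [exact: inS_finv | by rewrite finv_eq0 |] => D SD DC.
have [/eqP | DC'] := C_min _ (inS_finv D SD) (finv_subset DC).
  by rewrite finv_eq0 => /eqP; left.
by right; rewrite -DC' finvK.
Qed.

End Atoms.
End Closure.
End SchurRings.

(* Interpolation only involves the finitely many values of one element. *)
Theorem corollary2p10 (G : groupType) (F : fieldType)
  (charF0 : [pchar F] =i pred0) (S : FG G F -> Prop) :
  is_subring S ->
  (is_schur_ring S <->
   [/\ (forall a b, S a -> S b -> S (hadamard a b)),
       (forall a, S a -> S (FGstar a)),
       S (FG1 G F)
     & (forall g : G, exists a, S a /\ g \in supp a)]).
Proof.
move=> [S0 S_add S_scale S_mul]; split.
  case=> P [[P_part S_span] P1 P_finv _]; split.
  - exact: (S_hadamard S0 S_add S_scale P_part S_span).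
  - exact: (S_star S0 S_add S_scale S_span P_finv).
  - by rewrite -csum1; apply: S_csum S_span _ P1.
  - move=> g; have [_ _ /(_ g) [C [PC gC]]] := P_part.
    by exists (csum F C); rewrite supp_csum; split=> //; apply: S_csum S_span _ PC.
case=> S_had S_star S1 S_cover; exists (atom S); split.
- by split; [apply: atoms_partition S_add S_scale S_had S_cover | apply: S_spanE].
- exact: atom1.
- exact: atom_finv.
- move=> C D [SC _ _] [SD _ _].
  exact: S_span_atoms S_add S_scale S_had _ (S_mul _ _ SC SD).
Qed.
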